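(* Let $\Lambda\ge1$, $\tau=\Lambda/(\Lambda+1)$. Let $\bar E_-,\bar E_+\in\mathcal E_\infty(\Lambda)$ satisfy $\mathbb E[Z/\bar E_-\mid X]=\mathbb E[Z/\bar E_+\mid X]=1$ a.s., and $$1/\bar E_-=\begin{cases}1+\frac{1-e(X)}{e(X)}\Lambda & \text{if } Y<Q_{1-\tau}(X,1)\\ 1+\frac{1-e(X)}{e(X)}\Lambda^{-1}&\text{if } Y>Q_{1-\tau}(X,1)\end{cases},\qquad 1/\bar E_+=\begin{cases}1+\frac{1-e(X)}{e(X)}\Lambda & \text{if } Y>Q_{\tau}(X,1)\\ 1+\frac{1-e(X)}{e(X)}\Lambda^{-1}&\text{if } Y<Q_{\tau}(X,1)\end{cases}.$$ Then $\bar E_-$ solves both problems (a) minimize $\mathbb E[YZ/\bar E]$ over $\bar E\in\mathcal E_\infty(\Lambda)$ subject to $\mathbb E[Q_{1-\tau}(X,1)Z/\bar E]=\mathbb E[Q_{1-\tau}(X,1)]$, and (b) minimize $\mathbb E[YZ/\bar E]$ over $\bar E\in\mathcal E_\infty(\Lambda)$ subject to $\mathbb E[Z/\bar E\mid X]=1$; and $\bar E_+$ solves both problems (c) maximize $\mathbb E[YZ/\bar E]$ over $\bar E\in\mathcal E_\infty(\Lambda)$ subject to $\mathbb E[Q_{\tau}(X,1)Z/\bar E]=\mathbb E[Q_{\tau}(X,1)]$, and (d) maximize $\mathbb E[YZ/\bar E]$ over $\bar E\in\mathcal E_\infty(\Lambda)$ subject to $\mathbb E[Z/\bar E\mid X]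=1$.
   Context: Observed data $(X,Y,Z)\sim P$, $X\in\mathcal X\subseteq\mathbb R^d$, $Y\in\mathbb R$, $Z\in\{0,1\}$; $e(x)=P(Z=1\mid X=x)$ with $0<e(X)<1$ a.s., $\mathbb E|Y|<\infty$. $\mathcal E_\infty(\Lambda)$ is the set of random variables $\bar E$ defined jointly with $(X,Y,Z)$ with $\Lambda^{-1}\le\frac{\bar E/(1-\bar E)}{e(X)/(1-e(X))}\le\Lambda$ a.s. $F(y\mid x,z)=P(Y\le y\mid X=x,Z=z)$, $Q_t(x,z)=\inf\{q: F(q\mid x,z)\ge t\}$. *)

From HB Require Import structures.
From mathcomp Require Import all_boot all_order all_algebra.
From mathcomp Require Import all_classical all_reals all_analysis.
Set Implicit Arguments. Unset Strict Implicit. Unset Printing Implicit Defensive.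
Import Order.TTheory GRing.Theory Num.Theory.
Import numFieldNormedType.Exports.
Local Open Scope classical_set_scope.
Local Open Scope ring_scope.

Section sensitivity.
Context {R : realType} {d : measure_display} {Omega : measurableType d}.
Variable P : probability Omega R.
Variable n : nat.
(* covariates X in R^n (tuples with the product = Borel sigma-algebra),
   outcome Y, binary treatment Z *)
Variables (X : Omega -> n.-tuple R) (Y : Omega -> R) (Z : Omega -> bool).

Definition Zr (w : Omega) : R := (Z w)%:R.

(* e is a version of the propensity score e(x) = P(Z = 1 | X = x),
   with 0 < e(X) < 1 a.s. *)
Definition is_propensity (e : n.-tuple R -> R) : Prop :=
  measurable_fun setT e /\
  (forall B : set (n.-tuple R), measurable B ->
     (\int[P]_(w in X @^-1` B) (Zr w)%:E = \int[P]_(w in X @^-1` B) (e (X w))%:E)%E) /\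
  {ae P, forall w, 0 < e (X w) < 1}.

(* F is a (regular) version of the conditional c.d.f.
   F y x z = P(Y <= y | X = x, Z = z) *)
Definition is_cond_cdf (F : R -> n.-tuple R -> bool -> R) : Prop :=
  (forall x z, {homo (fun y => F y x z) : a b / a <= b}) /\
  (forall x z y, F q x z @[q --> y^'+] --> F y x z) /\
  (forall x z, F q x z @[q --> -oo] --> (0 : R)) /\
  (forall x z, F q x z @[q --> +oo] --> (1 : R)) /\
  (forall y z, measurable_fun setT (fun x => F y x z)) /\
  (forall y z (B : set (n.-tuple R)), measurable B ->
     P (X @^-1` B `&` Z @^-1` [set z] `&` [set w | Y w <= y]) =
     (\int[P]_(w in X @^-1` B `&` Z @^-1` [set z]) (F y (X w) z)%:E)%E).

Definition cond_quantile (F : R -> n.-tuple R -> bool -> R) (t : R)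
  (x : n.-tuple R) (z : bool) : R := inf [set q : R | t <= F q x z].

Definition odds (p : R) : R := p / (1 - p).

Definition E_infty (e : n.-tuple R -> R) (Lambda : R) (Eb : Omega -> R) : Prop :=
  measurable_fun setT Eb /\
  {ae P, forall w, Lambda^-1 <= odds (Eb w) / odds (e (X w)) <= Lambda}.

(* E[W | X] = 1 a.s.: W is integrable and the constant 1 satisfies the
   defining property of the conditional expectation given sigma(X) *)
Definition cond_exp_X_one (W : Omega -> R) : Prop :=
  P.-integrable setT (fun w => (W w)%:E) /\
  forall B : set (n.-tuple R), measurable B ->
    (\int[P]_(w in X @^-1` B) (W w)%:E)%E = P (X @^-1` B).

Definition objective (Eb : Omega -> R) : \bar R :=
  (\int[P]_w (Y w * Zr w / Eb w)%:E)%E.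

Definition feasible_quantile (e : n.-tuple R -> R) (Lambda : R)
  (q : n.-tuple R -> R) (Eb : Omega -> R) : Prop :=
  E_infty e Lambda Eb /\
  P.-integrable setT (fun w => (Y w * Zr w / Eb w)%:E) /\
  P.-integrable setT (fun w => (q (X w) * Zr w / Eb w)%:E) /\
  (\int[P]_w (q (X w) * Zr w / Eb w)%:E = \int[P]_w (q (X w))%:E)%E.

Definition feasible_cond (e : n.-tuple R -> R) (Lambda : R)
  (Eb : Omega -> R) : Prop :=
  E_infty e Lambda Eb /\
  P.-integrable setT (fun w => (Y w * Zr w / Eb w)%:E) /\
  cond_exp_X_one (fun w => Zr w / Eb w).

Definition solves_min (feas : (Omega -> R) -> Prop) (Eb0 : Omega -> R) : Prop :=
  feas Eb0 /\ forall Eb, feas Eb -> (objective Eb0 <= objective Eb)%E.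

Definition solves_max (feas : (Omega -> R) -> Prop) (Eb0 : Omega -> R) : Prop :=
  feas Eb0 /\ forall Eb, feas Eb -> (objective Eb <= objective Eb0)%E.

End sensitivity.

(* Write W = Z/E for a candidate E and W0 = Z/E0 for the proposed optimum.
   Membership in E_oo(Lambda) confines 1/E to
   [1 + (1-e)/e * Lambda^-1, 1 + (1-e)/e * Lambda], and the minimiser E0 takes
   the upper end where Y < q(X) and the lower end where Y > q(X).  Hence
   (Y - q(X)) W0 <= (Y - q(X)) W pointwise, and after integration
   E[Y W0] - E[q(X) W0] <= E[Y W] - E[q(X) W].
   Both kinds of constraint force E[q(X) W] = E[q(X)] = E[q(X) W0]: the
   quantile constraint directly, the conditional one through the tower property
   E[h(X) W] = E[h(X)], which passes from indicators to simple functions and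
   then, by monotone convergence, to integrable h. *)

From HB Require Import structures.
From mathcomp Require Import all_boot all_order all_algebra.
From mathcomp Require Import all_classical all_reals all_analysis.
From mathcomp Require Import finmap lra measurable_realfun.
Import Order.TTheory GRing.Theory Num.Theory.
Import numFieldNormedType.Exports.
Set Implicit Arguments.
Unset Strict Implicit.
Local Open Scope classical_set_scope.
Local Open Scope ring_scope.

Section quantile.
Context {R : realType}.

Lemma quantile_le_iff (G : R -> R) (t r : R) :
  {homo G : a b / a <= b} ->
  (forall y, G q @[q --> y^'+] --> G y) ->
  G q @[q --> -oo] --> (0 : R) ->
  G q @[q --> +oo] --> (1 : R) ->
  0 < t < 1 ->
  inf [set q | t <= G q] <= r <-> t <= G r.
Proof.
move=> G_nd G_rc G_oo G_oo' /andP[t0 t1].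
set S := [set q | t <= G q].
have [M GM] : exists M, forall q, q <= M -> G q < t.
  have [M [_ GM]] := cvgr_lt _ G_oo t t0.
  by exists (M - 1) => q qM; apply: GM; lra.
have lbS : lbound S M.
  move=> s Ss; rewrite leNgt; apply/negP => sM.
  by move: (GM s (ltW sM)); rewrite ltNge Ss.
have S_neq0 : S !=set0.
  have [N [_ GN]] := cvgr_gt _ G_oo' t t1.
  by exists (N + 1); apply/ltW/GN; lra.
split => [infr|Srt]; last exact: (ge_inf (ex_intro _ M lbS)).
rewrite leNgt; apply/negP => Grt.
have : \forall u \near r^'+, G u < t by exact: (cvgr_lt _ (G_rc r) _ Grt).
rewrite near_withinE /= => /nbhs_ballP[δ /= δ0 Gδ].
(* right continuity at [r] pushes the infimum of [S] above [r] *)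
have lbS' : lbound S (r + δ / 2).
  move=> s Ss; rewrite leNgt; apply/negP => sr.
  have [sr'|rs] := leP s r.
    by move: (le_lt_trans (G_nd _ _ sr') Grt); rewrite ltNge Ss.
  have : G s < t.
    by apply: Gδ => //; rewrite /ball /= ltr_norml; apply/andP; split; lra.
  by rewrite ltNge Ss.
by have := lb_le_inf S_neq0 lbS'; lra.
Qed.

Lemma measurable_quantile d (T : measurableType d) (G : R -> T -> R) (t : R) :
  (forall x, {homo G^~ x : a b / a <= b}) ->
  (forall x y, G q x @[q --> y^'+] --> G y x) ->
  (forall x, G q x @[q --> -oo] --> (0 : R)) ->
  (forall x, G q x @[q --> +oo] --> (1 : R)) ->
  (forall y, measurable_fun setT (G y)) ->
  0 < t < 1 ->
  measurable_fun setT (fun x => inf [set q | t <= G q x]).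
Proof.
move=> G_nd G_rc G_oo G_oo' mG t01.
apply: (measurability (@RGenOInfty.G R)); first exact: RGenOInfty.measurableE.
move=> _ [_ [r ->] <-].
have quantile_gtE x : (r < inf [set q | t <= G q x]) = (G r x < t).
  have le_iff := quantile_le_iff r (G_nd x) (G_rc x) (G_oo x) (G_oo' x) t01.
  by rewrite !ltNge; congr (~~ _); apply/idP/idP => /le_iff.
have -> : setT `&` (fun x => inf [set q | t <= G q x]) @^-1` `]r, +oo[ =
    setT `&` G r @^-1` `]-oo, t[.
  by rewrite !setTI; apply/funext => x /=; rewrite !in_itv /= andbT quantile_gtE.
exact: mG measurableT _ (measurable_itv _).
Qed.

End quantile.

Section odds.
Context {R : realType}.
Implicit Types p E L : R.

Lemma odds_gt0_prob E : 0 < odds E -> 0 < E < 1.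
Proof.
rewrite /odds; have [E1|E1|->] := ltgtP E 1.
- by rewrite pmulr_lgt0 ?invr_gt0 ?subr_gt0 // => ->.
- by rewrite nmulr_lgt0 ?invr_lt0 ?subr_lt0 // => E0; exfalso; lra.
- by rewrite subrr invr0 mulr0 ltxx.
Qed.

Lemma invf_prob_odds E : 0 < E < 1 -> E^-1 = 1 + (odds E)^-1.
Proof.
move=> /andP[E0 E1]; rewrite /odds invf_div mulrBl divff ?gt_eqF //.
by rewrite mul1r addrC subrK.
Qed.

Lemma odds_ratio_inv_bounds p E L : 0 < p < 1 -> 0 < L ->
  L^-1 <= odds E / odds p <= L ->
  1 + (1 - p) / p * L^-1 <= E^-1 <= 1 + (1 - p) / p * L.
Proof.
move=> /andP[p0 p1] L0 u_bounds; set u := odds E / odds p in u_bounds.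
have u0 : 0 < u by case/andP: u_bounds => + _; apply: lt_le_trans; rewrite invr_gt0.
have odds_p0 : 0 < odds p by rewrite divr_gt0 // subr_gt0.
have oddsE : odds E = u * odds p by rewrite divfK // gt_eqF.
clearbody u.
have E01 : 0 < E < 1 by apply: odds_gt0_prob; rewrite oddsE mulr_gt0.
rewrite (invf_prob_odds E01) oddsE invfM invf_div [u^-1 * _]mulrC.
have cp0 : 0 <= (1 - p) / p by rewrite divr_ge0 //; lra.
case/andP: u_bounds => Lu uL.
apply/andP; split; rewrite lerD2l ler_wpM2l //.
  by rewrite lef_pV2 ?posrE.
by rewrite -[leRHS]invrK lef_pV2 ?posrE ?invr_gt0.
Qed.

End odds.

Section extremal_weight.
Context {R : realDomainType}.

Lemma extremal_weight_le (a b i j y q : R) : a <= i <= b ->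
  (y < q -> j = b) -> (q < y -> j = a) -> (y - q) * j <= (y - q) * i.
Proof.
move=> /andP[ai ib] yq_b qy_a.
have [yq|qy|->] := ltgtP y q; last by rewrite subrr !mul0r.
  by rewrite (yq_b yq); apply: ler_wnM2l => //; rewrite subr_le0 ltW.
by rewrite (qy_a qy); apply: ler_wpM2l => //; rewrite subr_ge0 ltW.
Qed.

Lemma extremal_weight_ge (a b i j y q : R) : a <= i <= b ->
  (q < y -> j = b) -> (y < q -> j = a) -> (y - q) * i <= (y - q) * j.
Proof.
move=> iab qy_b yq_a; rewrite -lerN2 -!mulNr opprB.
exact: extremal_weight_le iab qy_b yq_a.
Qed.

End extremal_weight.

Section integral_ae.
Context {R : realType} {d : measure_display} {T : measurableType d}.
Variable mu : {measure set T -> \bar R}.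
Local Open Scope ereal_scope.

Lemma ae_eq_integrable (f g : T -> R) : measurable_fun setT f ->
  mu.-integrable setT (fun x => (g x)%:E) -> {ae mu, forall x, f x = g x} ->
  mu.-integrable setT (fun x => (f x)%:E).
Proof.
move=> mf /integrableP[mg g_fin] fg; apply/integrableP; split.
  exact/measurable_EFinP.
rewrite (ae_eq_integral (fun x => `|(g x)%:E|)) //.
- exact/measurableT_comp/measurable_EFinP.
- exact: measurableT_comp.
- by apply: filterS fg => x /= ->.
Qed.

Lemma ae_le_integral (f g : T -> R) :
  mu.-integrable setT (fun x => (f x)%:E) ->
  mu.-integrable setT (fun x => (g x)%:E) ->
  {ae mu, forall x, (f x <= g x)%R} ->
  \int[mu]_x (f x)%:E <= \int[mu]_x (g x)%:E.
Proof.
move=> fi gi [N [mN muN fgN]].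
rewrite (negligible_integral mN) // [leRHS](negligible_integral mN) //.
have mTN : measurable (setT `\` N) by exact: measurableD.
apply: le_integral => //.
- by apply: (integrableS measurableT mTN _ fi).
- by apply: (integrableS measurableT mTN _ gi).
move=> x /set_mem[_ Nx]; rewrite lee_fin.
by apply: contra_notT Nx => /negP; exact: fgN.
Qed.

Lemma ae_le_integral_offset (f0 u0 f1 u1 : T -> R) :
  mu.-integrable setT (fun x => (f0 x)%:E) ->
  mu.-integrable setT (fun x => (u0 x)%:E) ->
  mu.-integrable setT (fun x => (f1 x)%:E) ->
  mu.-integrable setT (fun x => (u1 x)%:E) ->
  \int[mu]_x (u0 x)%:E = \int[mu]_x (u1 x)%:E ->
  {ae mu, forall x, (f0 x - u0 x <= f1 x - u1 x)%R} ->
  \int[mu]_x (f0 x)%:E <= \int[mu]_x (f1 x)%:E.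
Proof.
move=> f0i u0i f1i u1i u01 le01.
have subi f u : mu.-integrable setT (fun x => (f x)%:E) ->
    mu.-integrable setT (fun x => (u x)%:E) ->
    mu.-integrable setT (fun x => (f x - u x)%:E).
  move=> fi ui; apply: (eq_integrable measurableT _ _ _ (integrableB measurableT fi ui)).
  by move=> x _; rewrite EFinB.
have integralB f u : mu.-integrable setT (fun x => (f x)%:E) ->
    mu.-integrable setT (fun x => (u x)%:E) ->
    \int[mu]_x (f x - u x)%:E = \int[mu]_x (f x)%:E - \int[mu]_x (u x)%:E.
  by move=> fi ui; rewrite -integralB_EFin.
have u1_fin : (- \int[mu]_x (u1 x)%:E) \is a fin_num.
  by rewrite fin_numN; exact: integrable_fin_num u1i.
have := ae_le_integral (subi _ _ f0i u0i) (subi _ _ f1i u1i) le01.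
by rewrite !integralB // u01 leeD2rE.
Qed.

End integral_ae.

Section tower_property.
Context {R : realType} {d d' : measure_display}
  {Omega : measurableType d} {T : measurableType d'}.
Variables (P : {measure set Omega -> \bar R}) (X : Omega -> T).
Hypothesis mX : measurable_fun setT X.
Local Open Scope ereal_scope.
Import HBNNSimple.

Let measurable_preimage B : measurable B -> measurable (X @^-1` B).
Proof. by move=> mB; rewrite -[X @^-1` _]setTI; exact: mX. Qed.

Lemma integral_nnsfun_compM (g : {nnsfun T >-> R}) (V : Omega -> R) :
  measurable_fun setT V -> (forall w, 0 <= V w)%R ->
  \int[P]_w (g (X w) * V w)%:E =
  \sum_(y <- fset_set (range g))
    y%:E * \int[P]_(w in X @^-1` (g @^-1` [set y])) (V w)%:E.
Proof.
move=> mV V_ge0.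
have gE w : (g (X w) * V w =
    \sum_(y <- fset_set (range g)) y * \1_(g @^-1` [set y]) (X w) * V w)%R.
  by rewrite fimfunE fsbig_finite //= mulr_suml.
have mindic y : measurable_fun setT (fun w => \1_(g @^-1` [set y]) (X w) : R).
  by apply: measurableT_comp => //; exact: measurable_indic.
under eq_integral do rewrite gE -sumEFin.
rewrite ge0_integral_sum //; last 2 first.
- by move=> y; apply/measurable_EFinP/measurable_funM => //; exact: measurable_funM.
- move=> y w _; rewrite lee_fin indicE.
  have [/set_mem <-|] := boolP (X w \in _); last by rewrite mulr0 mul0r.
  by rewrite mulr1 mulr_ge0.
apply: eq_big_seq => y; rewrite in_fset_set // => /set_mem[x _ <-].
under eq_integral do rewrite -mulrA EFinM.
rewrite ge0_integralZl_EFin //; last 2 first.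
- by move=> w _; rewrite lee_fin mulr_ge0 // indicE.
- by apply/measurable_EFinP; exact: measurable_funM.
congr (_ * _); rewrite [RHS]integral_mkcond; apply: eq_integral => w _.
rewrite /patch indicE.
have -> : (X w \in g @^-1` [set g x]) = (w \in X @^-1` (g @^-1` [set g x])).
  by apply/idP/idP => /set_mem h; apply/mem_set.
by case: (w \in _); rewrite ?mul1r ?mul0r.
Qed.

Variable V : Omega -> R.
Hypothesis mV : measurable_fun setT V.
Hypothesis V_ge0 : forall w, (0 <= V w)%R.
Hypothesis V_density : forall B, measurable B ->
  \int[P]_(w in X @^-1` B) (V w)%:E = P (X @^-1` B).

Lemma ge0_integral_comp_weight (h : T -> R) :
  measurable_fun setT h -> (forall x, 0 <= h x)%R ->
  \int[P]_w (h (X w) * V w)%:E = \int[P]_w (h (X w))%:E.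
Proof.
move=> mh h_ge0.
have mEh : measurable_fun setT (EFin \o h) by exact/measurable_EFinP.
pose g := nnsfun_approx measurableT mEh.
have approx (U : Omega -> R) : measurable_fun setT U -> (forall w, 0 <= U w)%R ->
    \int[P]_w (h (X w) * U w)%:E = limn (fun k => \int[P]_w (g k (X w) * U w)%:E).
  move=> mU U_ge0; rewrite -monotone_convergence //; last 3 first.
  - move=> k; apply/measurable_EFinP/measurable_funM => //.
    exact: measurableT_comp.
  - by move=> k w _; rewrite lee_fin mulr_ge0.
  - by move=> w _ a b ab; rewrite lee_fin ler_wpM2r //; exact/lefP/nd_nnsfun_approx.
  apply: eq_integral => w _; apply/esym/cvg_lim => //.
  under eq_fun do rewrite EFinM.
  rewrite EFinM; apply: cvgeZr => //.
  by apply: (cvg_nnsfun_approx measurableT mEh _ I) => x _; rewrite lee_fin.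
(* on simple functions the claim is [V_density] applied to each level set *)
rewrite approx //.
under [RHS]eq_integral do rewrite -[h _]mulr1.
rewrite approx //; congr (limn _); apply/funext => k.
rewrite !integral_nnsfun_compM //; apply: eq_big_seq => y _.
have mgy : measurable (g k @^-1` [set y]) by exact: measurable_funPTI.
by rewrite V_density // integral_cst ?mul1e //; exact: measurable_preimage.
Qed.

Lemma integral_comp_weight (h : T -> R) :
  measurable_fun setT h -> P.-integrable setT (fun w => (h (X w))%:E) ->
  P.-integrable setT (fun w => (h (X w) * V w)%:E) /\
  \int[P]_w (h (X w) * V w)%:E = \int[P]_w (h (X w))%:E.
Proof.
move=> mh hi.
have nonneg_minorant (s : T -> R) : measurable_fun setT s -> (forall x, 0 <= s x)%R ->
    (forall x, s x <= `|h x|)%R ->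
    [/\ P.-integrable setT (fun w => (s (X w))%:E),
        P.-integrable setT (fun w => (s (X w) * V w)%:E) &
        \int[P]_w (s (X w) * V w)%:E = \int[P]_w (s (X w))%:E].
  move=> ms s_ge0 s_le.
  have si : P.-integrable setT (fun w => (s (X w))%:E).
    apply: (le_integrable measurableT _ _ hi) => [|w _].
      exact/measurable_EFinP/measurableT_comp.
    by rewrite !abse_EFin lee_fin ger0_norm // s_le.
  have sVE := ge0_integral_comp_weight ms s_ge0.
  split => //; apply/integrableP; split.
    by apply/measurable_EFinP/measurable_funM => //; exact: measurableT_comp.
  under eq_integral do rewrite gee0_abs ?lee_fin ?mulr_ge0 //.
  rewrite sVE; case/integrableP: si => _.
  by under eq_integral do rewrite gee0_abs ?lee_fin //.
have hp_le x : (h^\+ x <= `|h x|)%R by rewrite ge_max ler_norm normr_ge0.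
have hn_le x : (h^\- x <= `|h x|)%R by rewrite ge_max -normrN ler_norm normr_ge0.
have [hpi hpVi hpVE] := nonneg_minorant _ (measurable_funrpos mh) (@funrpos_ge0 _ _ h) hp_le.
have [hni hnVi hnVE] := nonneg_minorant _ (measurable_funrneg mh) (@funrneg_ge0 _ _ h) hn_le.
have hE x : (h^\+ x - h^\- x = h x)%R by exact: (congr1 (@^~ x) (funrposBneg h)).
split.
  apply: (eq_integrable measurableT _ _ _ (integrableB measurableT hpVi hnVi)).
  by move=> w _; rewrite /= -EFinB -mulrBl hE.
transitivity (\int[P]_w ((h^\+ (X w) * V w)%:E - (h^\- (X w) * V w)%:E)).
  by apply: eq_integral => w _; rewrite -EFinB -mulrBl hE.
rewrite integralB_EFin // hpVE hnVE -integralB_EFin //.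
by apply: eq_integral => w _; rewrite -EFinB hE.
Qed.

End tower_property.

Section conditional_constraint.
Context {R : realType} {d : measure_display} {Omega : measurableType d}.
Variables (P : probability Omega R) (n : nat) (X : Omega -> n.-tuple R).
Hypothesis mX : measurable_fun setT X.
Local Open Scope ereal_scope.

Lemma cond_exp_X_one_integral (W : Omega -> R) (h : n.-tuple R -> R) :
  {ae P, forall w, 0 <= W w}%R -> cond_exp_X_one P X W ->
  measurable_fun setT h -> P.-integrable setT (fun w => (h (X w))%:E) ->
  P.-integrable setT (fun w => (h (X w) * W w)%:E) /\
  \int[P]_w (h (X w) * W w)%:E = \int[P]_w (h (X w))%:E.
Proof.
move=> W_ge0 [Wi W_density] mh hi.
have mW : measurable_fun setT W by apply/measurable_EFinP; exact: measurable_int Wi.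
have mWp := measurable_funrpos mW.
have W_ae : {ae P, forall w, W^\+%R w = W w}.
  by apply: filterS W_ge0 => w /max_idPl.
have Wp_density B : measurable B ->
    \int[P]_(w in X @^-1` B) (W^\+%R w)%:E = P (X @^-1` B).
  move=> mB; rewrite -W_density //; apply: ae_eq_integral.
  - by rewrite -[X @^-1` _]setTI; exact: mX.
  - exact/measurable_EFinP/measurable_funTS.
  - exact/measurable_EFinP/measurable_funTS.
  - by apply: filterS W_ae => w -> _.
have [hWpi hWpE] := integral_comp_weight mX mWp (@funrpos_ge0 _ _ W) Wp_density mh hi.
have mhW : measurable_fun setT (fun w => h (X w) * W w)%R.
  by apply: measurable_funM => //; exact: measurableT_comp.
have hW_ae : {ae P, forall w, h (X w) * W w = h (X w) * W^\+%R w}%R.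
  by apply: filterS W_ae => w ->.
split; first exact: ae_eq_integrable mhW hWpi hW_ae.
rewrite -hWpE; apply: ae_eq_integral => //.
- exact/measurable_EFinP.
- by apply/measurable_EFinP/measurable_funM => //; exact: measurableT_comp.
- by apply: filterS hW_ae => w -> _.
Qed.

End conditional_constraint.

Section solves_sub.
Context {R : realType} {d : measure_display} {Omega : measurableType d}.
Variables (P : probability Omega R) (Y : Omega -> R) (Z : Omega -> bool).
Variables (feas feas' : (Omega -> R) -> Prop) (E0 : Omega -> R).
Hypothesis feas'_sub : forall Eb, feas' Eb -> feas Eb.
Hypothesis feas'_E0 : feas' E0.

Lemma solves_min_sub : solves_min P Y Z feas E0 -> solves_min P Y Z feas' E0.
Proof. by move=> [_ E0_min]; split=> // Eb /feas'_sub; exact: E0_min. Qed.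

Lemma solves_max_sub : solves_max P Y Z feas E0 -> solves_max P Y Z feas' E0.
Proof. by move=> [_ E0_max]; split=> // Eb /feas'_sub; exact: E0_max. Qed.

End solves_sub.

Section sensitivity_problems.
Context {R : realType} {d : measure_display} {Omega : measurableType d}.
Variables (P : probability Omega R) (n : nat).
Variables (X : Omega -> n.-tuple R) (Y : Omega -> R) (Z : Omega -> bool).
Variables (e : n.-tuple R -> R) (Lambda : R).
Hypothesis mX : measurable_fun setT X.
Hypothesis Lambda_gt0 : 0 < Lambda.
Hypothesis e01 : {ae P, forall w, 0 < e (X w) < 1}.

Let weight_lo w := 1 + (1 - e (X w)) / e (X w) * Lambda^-1.
Let weight_hi w := 1 + (1 - e (X w)) / e (X w) * Lambda.

Lemma E_infty_inv_bounds Eb : E_infty P X e Lambda Eb ->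
  {ae P, forall w, weight_lo w <= (Eb w)^-1 <= weight_hi w}.
Proof.
by case=> _; apply: filterS2 e01 => w e01w; exact: odds_ratio_inv_bounds.
Qed.

Lemma E_infty_weight_ge0 Eb : E_infty P X e Lambda Eb ->
  {ae P, forall w, 0 <= Zr Z w / Eb w}.
Proof.
move/E_infty_inv_bounds; apply: filterS2 e01 => w /andP[e0 e1] /andP[lo_le _].
rewrite mulr_ge0 ?ler0n // (le_trans _ lo_le) // (le_trans ler01) // lerDl.
by rewrite mulr_ge0 ?divr_ge0 ?invr_ge0 ?subr_ge0 ?(ltW e0) ?(ltW e1) ?(ltW Lambda_gt0).
Qed.

Lemma feasible_cond_quantile (q : n.-tuple R -> R) :
  measurable_fun setT q -> P.-integrable setT (fun w => (q (X w))%:E) ->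
  forall Eb, feasible_cond P X Y Z e Lambda Eb ->
  feasible_quantile P X Y Z e Lambda q Eb.
Proof.
move=> mq qi Eb [Eb_infty [YEbi Eb_cond]].
have [qWi qWE] := cond_exp_X_one_integral mX (E_infty_weight_ge0 Eb_infty) Eb_cond mq qi.
rewrite /feasible_quantile.
have -> : (fun w => (q (X w) * Zr Z w / Eb w)%:E) =
    (fun w => (q (X w) * (Zr Z w / Eb w))%:E).
  by apply/funext => w; rewrite mulrA.
exact: (conj Eb_infty (conj YEbi (conj qWi qWE))).
Qed.

Lemma extremal_solves_min (q : n.-tuple R -> R) E0 :
  feasible_quantile P X Y Z e Lambda q E0 ->
  {ae P, forall w, (Y w < q (X w) -> (E0 w)^-1 = weight_hi w) /\
                   (q (X w) < Y w -> (E0 w)^-1 = weight_lo w)} ->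
  solves_min P Y Z (feasible_quantile P X Y Z e Lambda q) E0.
Proof.
move=> E0_feas E0_ae; split=> // Eb [Eb_infty [YEbi [qEbi qEbE]]].
case: E0_feas => _ [YE0i [qE0i qE0E]].
apply: (ae_le_integral_offset YE0i qE0i YEbi qEbi); first by rewrite qE0E qEbE.
apply: filterS2 (E_infty_inv_bounds Eb_infty) E0_ae => w Eb_bounds [E0_hi E0_lo].
rewrite -!mulrBl mulrAC [leRHS]mulrAC; apply: ler_wpM2r; first exact: ler0n.
exact: extremal_weight_le Eb_bounds E0_hi E0_lo.
Qed.

Lemma extremal_solves_max (q : n.-tuple R -> R) E0 :
  feasible_quantile P X Y Z e Lambda q E0 ->
  {ae P, forall w, (q (X w) < Y w -> (E0 w)^-1 = weight_hi w) /\
                   (Y w < q (X w) -> (E0 w)^-1 = weight_lo w)} ->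
  solves_max P Y Z (feasible_quantile P X Y Z e Lambda q) E0.
Proof.
move=> E0_feas E0_ae; split=> // Eb [Eb_infty [YEbi [qEbi qEbE]]].
case: E0_feas => _ [YE0i [qE0i qE0E]].
apply: (ae_le_integral_offset YEbi qEbi YE0i qE0i); first by rewrite qE0E qEbE.
apply: filterS2 (E_infty_inv_bounds Eb_infty) E0_ae => w Eb_bounds [E0_hi E0_lo].
rewrite -!mulrBl mulrAC [leRHS]mulrAC; apply: ler_wpM2r; first exact: ler0n.
exact: extremal_weight_ge Eb_bounds E0_hi E0_lo.
Qed.

End sensitivity_problems.

Unset Implicit Arguments.

Theorem proposition4 (R : realType) (d : measure_display) (Omega : measurableType d)
  (P : probability Omega R) (n : nat)
  (X : Omega -> n.-tuple R) (Y : Omega -> R) (Z : Omega -> bool)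
  (e : n.-tuple R -> R) (F : R -> n.-tuple R -> bool -> R)
  (Lambda : R) (Em Ep : Omega -> R) :
  measurable_fun setT X -> measurable_fun setT Y -> measurable_fun setT Z ->
  P.-integrable setT (fun w => (Y w)%:E) ->
  is_propensity P X Z e ->
  is_cond_cdf P X Y Z F ->
  1 <= Lambda ->
  let tau := Lambda / (Lambda + 1) in
  let qm := fun x => cond_quantile F (1 - tau) x true in
  let qp := fun x => cond_quantile F tau x true in
  P.-integrable setT (fun w => (qm (X w))%:E) ->
  P.-integrable setT (fun w => (qp (X w))%:E) ->
  E_infty P X e Lambda Em -> E_infty P X e Lambda Ep ->
  cond_exp_X_one P X (fun w => Zr Z w / Em w) ->
  cond_exp_X_one P X (fun w => Zr Z w / Ep w) ->
  P.-integrable setT (fun w => (Y w * Zr Z w / Em w)%:E) ->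
  P.-integrable setT (fun w => (Y w * Zr Z w / Ep w)%:E) ->
  {ae P, forall w,
    (Y w < qm (X w) -> (Em w)^-1 = 1 + (1 - e (X w)) / e (X w) * Lambda) /\
    (qm (X w) < Y w -> (Em w)^-1 = 1 + (1 - e (X w)) / e (X w) * Lambda^-1)} ->
  {ae P, forall w,
    (qp (X w) < Y w -> (Ep w)^-1 = 1 + (1 - e (X w)) / e (X w) * Lambda) /\
    (Y w < qp (X w) -> (Ep w)^-1 = 1 + (1 - e (X w)) / e (X w) * Lambda^-1)} ->
  [/\ solves_min P Y Z (feasible_quantile P X Y Z e Lambda qm) Em,
      solves_min P Y Z (feasible_cond P X Y Z e Lambda) Em,
      solves_max P Y Z (feasible_quantile P X Y Z e Lambda qp) Ep &
      solves_max P Y Z (feasible_cond P X Y Z e Lambda) Ep].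
Proof.
move=> mX _ _ _ [_ [_ e01]] [F_nd [F_rc [F_oo [F_oo' [mF _]]]]] L1 tau qm qp
  qmi qpi Em_infty Ep_infty Em_cond Ep_cond YEmi YEpi Em_ae Ep_ae.
have L0 : 0 < Lambda by lra.
have tau01 : 0 < tau < 1.
  by apply/andP; split; [rewrite divr_gt0 //; lra|rewrite ltr_pdivrMr; lra].
have mq t : 0 < t < 1 -> measurable_fun setT (fun x => cond_quantile F t x true).
  exact: measurable_quantile (fun x => F_nd x true) (fun x => F_rc x true)
    (fun x => F_oo x true) (fun x => F_oo' x true) (fun y => mF y true).
have mqm : measurable_fun setT qm by apply: mq; lra.
have mqp : measurable_fun setT qp by exact: mq.
have qm_sub := feasible_cond_quantile (Y := Y) (Z := Z) mX L0 e01 mqm qmi.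
have qp_sub := feasible_cond_quantile (Y := Y) (Z := Z) mX L0 e01 mqp qpi.
have Em_cond_feas : feasible_cond P X Y Z e Lambda Em by [].
have Ep_cond_feas : feasible_cond P X Y Z e Lambda Ep by [].
have Em_min := extremal_solves_min L0 e01 (qm_sub _ Em_cond_feas) Em_ae.
have Ep_max := extremal_solves_max L0 e01 (qp_sub _ Ep_cond_feas) Ep_ae.
split=> //.
- exact: solves_min_sub qm_sub Em_cond_feas Em_min.
- exact: solves_max_sub qp_sub Ep_cond_feas Ep_max.
Qed.
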